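(* The profinite completion $\widehat{\mathbb{N}}$ of $(\mathbb{N},+)$ is isomorphic, as a semigroup, to $(\mathbb{N} \cup \widehat{\mathbb{Z}}, \widehat{+})$, where $\mathbb{N}$ and $\widehat{\mathbb{Z}}$ are taken disjoint and $$a \,\widehat{+}\, b = \begin{cases} a + b \in \mathbb{N} & \text{if } a, b \in \mathbb{N},\\ a + b \in \widehat{\mathbb{Z}} & \text{otherwise},\end{cases}$$ where in the second case elements of $\mathbb{N}$ are mapped into $\widehat{\mathbb{Z}}$ by the natural embedding.
   Context: $\mathbb{N} = \{1,2,3,\dots\}$ and $\widehat{\mathbb{Z}} = \varprojlim_n \mathbb{Z}/n\mathbb{Z}$. For positive integers $m, n$, let $\mathbb{Z}_{m,n}$ be the semigroup with underlying set $\{1, \dots, m-1\} \sqcup \mathbb{Z}/n\mathbb{Z}$ and operation $a \dotplus b = a + b \in \{1,\dots,m-1\}$ if $a, b \in \{1,\dots,m-1\}$ and $a+b < m$, and $a \dotplus b = \overline{a+b} \in \mathbb{Z}/n\mathbb{Z}$ otherwise; the quotient map $\pi_{m,n} : \mathbb{N} \to \mathbb{Z}_{m,n}$ sends $a$ to $a$ if $a < m$ and to $\overline{a} \in \mathbb{Z}/n\mathbb{Z}$ if $a \ge m$. (Every finite quotient semigroup of $(\mathbb{N},+)$ is isomorphic to some $\mathbb{Z}_{m,n}$.) If $m \le k$ and $n \mid l$ there is a natural homomorphism $\phi_{(k,l),(m,n)} : \mathbb{Z}_{k,l} \to \mathbb{Z}_{m,n}$ compatible with the quotient maps. The profinite completion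 $\widehat{\mathbb{N}}$ is defined as the projective limit of the system $(\mathbb{Z}_{m,n}, \phi_{(k,l),(m,n)})$. *)

From mathcomp Require Import all_boot.
From mathcomp Require Import zify.

Set Implicit Arguments.
Unset Strict Implicit.
Unset Printing Implicit Defensive.

(* An element of Z_{m,n} is encoded in the raw carrier nat + nat:           *)
(*   inl a  encodes a in {1,...,m-1}          (valid iff 0 < a < m)          *)
(*   inr r  encodes the residue class of r in Z/nZ (valid iff r < n).        *)
Definition Zraw := (nat + nat)%type.

Definition validZ (m n : nat) (u : Zraw) : bool :=
  match u with inl a => (0 < a < m) | inr r => r < n end.

Definition piZ (m n a : nat) : Zraw := if a < m then inl a else inr (a %% n).

Definition addZ (m n : nat) (u v : Zraw) : Zraw :=
  match u, v with
  | inl a, inl b => if a + b < m then inl (a + b) else inr ((a + b) %% n)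
  | inl a, inr r => inr ((a + r) %% n)
  | inr r, inl b => inr ((r + b) %% n)
  | inr r, inr s => inr ((r + s) %% n)
  end.

(* the natural homomorphism phi_{(k,l),(m,n)} : Z_{k,l} -> Z_{m,n}
   (m <= k, n | l); it only depends on (m,n). *)
Definition phiZ (m n : nat) (u : Zraw) : Zraw :=
  match u with inl a => piZ m n a | inr r => inr (r %% n) end.

(* Indices are shifted: the component x m n lives in Z_{m+1, n+1}, so that   *)
(* (m, n) ranges over all pairs of positive integers (m+1, n+1).            *)
Definition is_Nhat (x : nat -> nat -> Zraw) : Prop :=
  (forall m n, validZ m.+1 n.+1 (x m n)) /\
  (forall m n k l, m <= k -> n.+1 %| l.+1 ->
     phiZ m.+1 n.+1 (x k l) = x m n).

Definition Nhat := {x : nat -> nat -> Zraw | is_Nhat x}.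

(* Zhat = lim_n Z/nZ, again with shifted index: z n lives in Z/(n+1)Z,       *)
(* represented by its residue in [0, n].                                    *)
Definition is_Zhat (z : nat -> nat) : Prop :=
  (forall n, z n < n.+1) /\
  (forall n l, n.+1 %| l.+1 -> z l %% n.+1 = z n).

Definition Zhat := {z : nat -> nat | is_Zhat z}.

(* positive naturals N = {1,2,3,...} *)
Definition Npos := {a : nat | 0 < a}.

Lemma phi_pi m n k l c : m <= k -> n %| l -> phiZ m n (piZ k l c) = piZ m n c.
Proof.
move=> mk nl; rewrite /piZ; case: ifP => ck //=.
have -> : (c < m) = false by apply/negbTE; rewrite -leqNgt; lia.
by rewrite modn_dvdm.
Qed.

Lemma phiZ_add m n k l u v : m <= k -> n %| l ->
  phiZ m n (addZ k l u v) = addZ m n (phiZ m n u) (phiZ m n v).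
Proof.
move=> mk nl.
case: u => [a|r]; case: v => [b|s] /=.
- have -> : (if a + b < k then inl (a + b) else inr ((a + b) %% l))
            = piZ k l (a + b) by [].
  rewrite phi_pi // /piZ.
  case: (ltnP a m) => am; case: (ltnP b m) => bm /=.
  + by [].
  + have -> : (a + b < m) = false by apply/negbTE; rewrite -leqNgt; lia.
    by rewrite modnDmr.
  + have -> : (a + b < m) = false by apply/negbTE; rewrite -leqNgt; lia.
    by rewrite modnDml.
  + have -> : (a + b < m) = false by apply/negbTE; rewrite -leqNgt; lia.
    by rewrite modnDm.
- rewrite modn_dvdm // /piZ; case: ifP => _ /=.
  + by rewrite modnDmr.
  + by rewrite modnDm.
- rewrite modn_dvdm // /piZ; case: ifP => _ /=.
  + by rewrite modnDml.
  + by rewrite modnDm.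
- by rewrite modn_dvdm // modnDm.
Qed.

Lemma validZ_add m n u v : 0 < n -> validZ m n u -> validZ m n v ->
  validZ m n (addZ m n u v).
Proof.
move=> n0; case: u => [a|r]; case: v => [b|s] /=; rewrite ?ltn_pmod //.
move=> /andP[a0 _] /andP[b0 _]; case: ifP => /= h; last by rewrite ltn_pmod.
by rewrite h andbT addn_gt0 a0.
Qed.

Definition Nhat_add_raw (x y : nat -> nat -> Zraw) : nat -> nat -> Zraw :=
  fun m n => addZ m.+1 n.+1 (x m n) (y m n).

Lemma is_Nhat_add x y : is_Nhat x -> is_Nhat y -> is_Nhat (Nhat_add_raw x y).
Proof.
move=> [vx cx] [vy cy]; split.
- by move=> m n; apply: validZ_add.
- move=> m n k l mk nl; have mk' : m.+1 <= k.+1 by [].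
  rewrite /Nhat_add_raw (phiZ_add _ _ mk' nl).
  by rewrite cx // cy.
Qed.

Definition Nhat_add (x y : Nhat) : Nhat :=
  exist _ (Nhat_add_raw (proj1_sig x) (proj1_sig y))
        (is_Nhat_add (proj2_sig x) (proj2_sig y)).

Definition Zhat_add_raw (z w : nat -> nat) : nat -> nat :=
  fun n => (z n + w n) %% n.+1.

Lemma is_Zhat_add z w : is_Zhat z -> is_Zhat w -> is_Zhat (Zhat_add_raw z w).
Proof.
move=> [vz cz] [vw cw]; split.
- by move=> n; rewrite ltn_pmod.
- move=> n l nl; rewrite /Zhat_add_raw modn_dvdm // -modnDm cz // cw // modnDm.
Qed.

Definition Zhat_add (z w : Zhat) : Zhat :=
  exist _ (Zhat_add_raw (proj1_sig z) (proj1_sig w))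
        (is_Zhat_add (proj2_sig z) (proj2_sig w)).

Lemma is_Zhat_embed a : is_Zhat (fun n => a %% n.+1).
Proof.
split; first by move=> n; rewrite ltn_pmod.
by move=> n l nl; rewrite modn_dvdm.
Qed.

Definition Zhat_embed (a : nat) : Zhat := exist _ _ (is_Zhat_embed a).

Definition NZhat := (Npos + Zhat)%type.

Lemma Npos_add_pos (a b : Npos) : 0 < proj1_sig a + proj1_sig b.
Proof. by rewrite addn_gt0 (proj2_sig a). Qed.

Definition NZhat_add (u v : NZhat) : NZhat :=
  match u, v with
  | inl a, inl b => inl (exist _ (proj1_sig a + proj1_sig b) (Npos_add_pos a b))
  | inl a, inr z => inr (Zhat_add (Zhat_embed (proj1_sig a)) z)
  | inr z, inl b => inr (Zhat_add z (Zhat_embed (proj1_sig b)))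
  | inr z, inr w => inr (Zhat_add z w)
  end.

From mathcomp Require Import all_boot.
From mathcomp Require Import zify.
From Stdlib Require Import ProofIrrelevance FunctionalExtensionality.
From Stdlib Require Import ClassicalEpsilon.

Set Implicit Arguments.
Unset Strict Implicit.
Unset Printing Implicit Defensive.

(* A compatible family x in Nhat either has a component inl a in the finite
   part of some Z_{m,n}; then, comparing any other index (m',n') with the
   common refinement (max(m,m'), nn'), every component is pi_{m',n'}(a), so x
   is the image of the natural number a.  Or all components lie in the cyclic
   parts; then the component at (m,n) is determined by its image in
   Z_{1,n} = Z/nZ, and x is the image of an element of Zhat.  The resulting
   bijection N ⊔ Zhat -> Nhat is additive because each pi_{m,n} is. *)

Lemma Nhat_ext (x y : Nhat) :
  (forall m n, proj1_sig x m n = proj1_sig y m n) -> x = y.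
Proof.
move=> exy; apply: eq_sig_hprop => [? ? ?|]; first exact: proof_irrelevance.
by do 2![apply: functional_extensionality => ?].
Qed.

Lemma Zhat_ext (z w : Zhat) : (forall n, proj1_sig z n = proj1_sig w n) -> z = w.
Proof.
move=> ezw; apply: eq_sig_hprop => [? ? ?|]; first exact: proof_irrelevance.
exact: functional_extensionality.
Qed.

Lemma piZ_add m n a b : addZ m n (piZ m n a) (piZ m n b) = piZ m n (a + b).
Proof.
rewrite /piZ; case: (ltnP a m) => am; case: (ltnP b m) => bm //=;
  have -> : (a + b < m) = false by apply/negbTE; rewrite -leqNgt; lia.
- by rewrite modnDmr.
- by rewrite modnDml.
- by rewrite modnDm.
Qed.

Lemma is_Nhat_piZ a : 0 < a -> is_Nhat (fun m n => piZ m.+1 n.+1 a).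
Proof.
move=> a_gt0; split=> [m n|m n k l mk nl]; last exact: phi_pi.
by rewrite /piZ; case: ifP => /= [->|_]; rewrite ?a_gt0 ?ltn_pmod.
Qed.

Lemma is_Nhat_Zhat (z : Zhat) : is_Nhat (fun _ n => inr (proj1_sig z n)).
Proof. by case: z => z [z_lt z_mod]; split=> //= m n k l _ /z_mod ->. Qed.

Definition Nhat_of_Npos (a : Npos) : Nhat :=
  exist _ _ (@is_Nhat_piZ _ (proj2_sig a)).

Definition Nhat_of_Zhat (z : Zhat) : Nhat := exist _ _ (is_Nhat_Zhat z).

Definition Nhat_of_NZhat (u : NZhat) : Nhat :=
  match u with inl a => Nhat_of_Npos a | inr z => Nhat_of_Zhat z end.

Lemma Nhat_of_NZhat_add u v :
  Nhat_of_NZhat (NZhat_add u v) = Nhat_add (Nhat_of_NZhat u) (Nhat_of_NZhat v).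
Proof.
apply: Nhat_ext => m n.
case: u v => [[a a_gt0]|[z z_Zhat]] [[b b_gt0]|[w w_Zhat]];
  rewrite /= /Nhat_add_raw /Zhat_add_raw ?piZ_add //= /piZ.
- by case: ifP => //= _; rewrite modnDml.
- by case: ifP => //= _; rewrite modnDmr.
Qed.

Lemma Nhat_of_NZhat_inj : injective Nhat_of_NZhat.
Proof.
move=> [[a a_gt0]|[z z_Zhat]] [[b b_gt0]|[w w_Zhat]] /= exy.
- have := f_equal (fun x : Nhat => proj1_sig x (a + b) 0) exy.
  rewrite /= /piZ !ltnS leq_addr leq_addl => -[eq_ab]; subst b.
  by congr (inl (exist _ _ _)); apply: eq_irrelevance.
- by have := f_equal (fun x : Nhat => proj1_sig x a 0) exy; rewrite /= /piZ ltnSn.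
- by have := f_equal (fun x : Nhat => proj1_sig x b 0) exy; rewrite /= /piZ ltnSn.
- congr inr; apply: Zhat_ext => n /=.
  by have := f_equal (fun x : Nhat => proj1_sig x 0 n) exy => -[].
Qed.

Definition residue (u : Zraw) : nat := if u is inr r then r else 0.

Section NhatComponents.

Variable x : Nhat.

Let xc := proj1_sig x.
Let x_valid : forall m n, validZ m.+1 n.+1 (xc m n) := proj1 (proj2_sig x).
Let x_compat : forall m n k l, m <= k -> n.+1 %| l.+1 ->
  phiZ m.+1 n.+1 (xc k l) = xc m n := proj2 (proj2_sig x).

Lemma Nhat_inl_component m n a :
  xc m n = inl a -> forall m' n', xc m' n' = piZ m'.+1 n'.+1 a.
Proof.
move=> xa m' n'; set L := (n.+1 * n'.+1).-1.
have [dvd_n dvd_n'] : n.+1 %| L.+1 /\ n'.+1 %| L.+1.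
  by rewrite prednK ?muln_gt0 // dvdn_mulr // dvdn_mull.
have xK : xc (maxn m m') L = inl a.
  have := x_compat (leq_maxl m m') dvd_n.
  rewrite {}xa; case: (xc _ _) => [b|r] //=.
  by rewrite /piZ; case: ifP => // _ [->].
by rewrite -(x_compat (leq_maxr m m') dvd_n') xK.
Qed.

(* Z_{1,n} has no finite part, so the components at m = 0 are always inr. *)
Lemma Nhat_component0 n : xc 0 n = inr (residue (xc 0 n)).
Proof. by have := x_valid 0 n; case: (xc 0 n) => [[|[|a]]|]. Qed.

Lemma is_Zhat_Nhat_residue : is_Zhat (fun n => residue (xc 0 n)).
Proof.
split=> [n|n l nl]; first by have := x_valid 0 n; rewrite Nhat_component0.
by have := x_compat (leqnn 0) nl; rewrite [xc 0 l]Nhat_component0 => /= <-.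
Qed.

Lemma Nhat_inr_component m n r : xc m n = inr r -> r = residue (xc 0 n).
Proof.
move=> xr; have := x_compat (leq0n m) (dvdnn n.+1).
have := x_valid m n; rewrite xr Nhat_component0 /= => r_lt [<-].
by rewrite modn_small.
Qed.

End NhatComponents.

Definition Zhat_of_Nhat (x : Nhat) : Zhat := exist _ _ (is_Zhat_Nhat_residue x).

Lemma Nhat_of_NZhat_surj x : exists u, Nhat_of_NZhat u = x.
Proof.
case: (classic (exists m n a, proj1_sig x m n = inl a)) => [[m [n [a xa]]]|no_inl].
- have := proj1 (proj2_sig x) m n; rewrite xa => /andP[a_gt0 _].
  exists (inl (exist _ a a_gt0)); apply: Nhat_ext => m' n' /=.
  by rewrite (Nhat_inl_component xa).
- exists (inr (Zhat_of_Nhat x)); apply: Nhat_ext => m n /=.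
  case xmn: (proj1_sig x m n) => [a|r]; first by case: no_inl; exists m, n, a.
  by rewrite (Nhat_inr_component xmn).
Qed.

Lemma surj_inj_inverse (A B : Type) (g : A -> B) :
  (forall y, exists x, g x = y) -> injective g ->
  exists f : B -> A, cancel f g /\ cancel g f.
Proof.
move=> g_surj g_inj.
pose f y := proj1_sig (constructive_indefinite_description _ (g_surj y)).
have fK : cancel f g by move=> y; rewrite /f; case: constructive_indefinite_description.
by exists f; split=> // x; apply: g_inj; rewrite fK.
Qed.

Theorem proposition2p1 :
  exists f : Nhat -> NZhat,
    bijective f /\ (forall x y : Nhat, f (Nhat_add x y) = NZhat_add (f x) (f y)).
Proof.
have [f [fK gK]] := surj_inj_inverse Nhat_of_NZhat_surj Nhat_of_NZhat_inj.
exists f; split; first by exists Nhat_of_NZhat.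
by move=> x y; apply: Nhat_of_NZhat_inj; rewrite Nhat_of_NZhat_add !fK.
Qed.
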